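(* Let $L$ be an upper semimodular lattice of finite length. Let $\xi=(x_1,\dots,x_k)\in L^k$ and let $z\in L$ with $z\not\le c_1(\xi)$. Put $$P_\xi=\{i: x_i\parallel z\},\qquad B_\xi=\{i: x_i<z\}.$$ If $|P_\xi|\le|B_\xi|$, then $z\notin M(\xi)$.
   Context: A lattice is upper semimodular if for all $x,y$, $x\wedge y\prec x$ implies $y\prec x\vee y$. $d(x,y)$ is the length of a shortest path between $x$ and $y$ in the undirected covering graph of $L$. $c_1(\xi)=x_1\vee\dots\vee x_k$. $M(\xi)$ is the set of medians of $\xi$, i.e. the elements $y\in L$ minimizing $r(y,\xi)=\sum_{i=1}^k d(y,x_i)$. $x\parallel z$ means that $x$ and $z$ are incomparable. *)

From HB Require Import structures.
From mathcomp Require Import all_boot all_order.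
From mathcomp Require Import boolp.
Set Implicit Arguments. Unset Strict Implicit. Unset Printing Implicit Defensive.
Import Order.TTheory.
Local Open Scope order_scope.

Section Lat.
Context {disp : Order.disp_t} {L : latticeType disp}.

Definition covers (x y : L) : Prop := x < y /\ ~ (exists w : L, x < w /\ w < y).

Definition upper_semimodular : Prop :=
  forall x y : L, covers (x `&` y) x -> covers y (x `|` y).

Definition finite_length : Prop :=
  exists N : nat, forall s : seq L, sorted <%O s -> (size s <= N)%N.

Definition cover_adj (x y : L) : Prop := covers x y \/ covers y x.

Fixpoint walk (n : nat) (x y : L) : Prop :=
  match n with
  | 0 => x = y
  | S m => exists w, cover_adj x w /\ walk m w y
  end.

(* d(x,y): length of a shortest walk (0 by convention if none exists,
   which never happens in a lattice of finite length) *)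
Definition dist (x y : L) : nat :=
  match pselect (exists n, `[< walk n x y >]) with
  | left h => ex_minn h
  | right _ => 0%N
  end.

Definition remoteness (k : nat) (xi : 'I_k -> L) (y : L) : nat :=
  (\sum_(i < k) dist y (xi i))%N.

Definition is_median (k : nat) (xi : 'I_k -> L) (y : L) : Prop :=
  forall y' : L, (remoteness xi y <= remoteness xi y')%N.

End Lat.

From HB Require Import structures.
From mathcomp Require Import all_boot all_order.
From mathcomp Require Import boolp zify.
Set Implicit Arguments. Unset Strict Implicit. Unset Printing Implicit Defensive.
Import Order.TTheory.
Local Open Scope order_scope.

(* Upper semimodularity gives the Jordan-Dedekind chain condition, so the
   corank g (the common length of all maximal chains up to the top) drops by
   exactly one along each covering, and d(w, x) = g w + g x - 2 g (w ∨ x).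
   Let c = c₁(ξ), y = z ∧ c < z and m = d(y, z) > 0.  No x_i lies above z;
   if x_i < z then x_i ≤ y and d(y, x_i) = d(z, x_i) - m; if x_i ∥ z then
   y ∨ x_i < z ∨ x_i, whence d(y, x_i) ≤ d(z, x_i) + m - 2.  Summing,
   r(y, ξ) + m |B| + 2 |P| ≤ r(z, ξ) + m |P|, and |P| ≤ |B|, |P| + |B| = k > 0
   force r(y, ξ) < r(z, ξ). *)

Lemma card_sum_nat (I : finType) (p : pred I) : #|p| = (\sum_i p i)%N.
Proof.
by rewrite -sum1_card big_mkcond; apply: eq_bigr => i _; rewrite unfold_in; case: (p i).
Qed.

Section Covers.
Context {disp : Order.disp_t} {L : latticeType disp}.
Implicit Types a b c d w x : L.

Lemma covers_lt a b : covers a b -> a < b.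
Proof. by case. Qed.

Lemma covers_le_eq a b d : covers a b -> a < d -> d <= b -> d = b.
Proof.
move=> [_ no_mid] ad db; apply/eqP; apply: contraT => ndb.
by case: no_mid; exists d; split => //; rewrite lt_neqAle ndb db.
Qed.

Lemma covers_meet_eq a b d : covers a b -> a <= d -> ~~ (b <= d) -> b `&` d = a.
Proof.
move=> hab ad nbd.
have : a <= b `&` d by rewrite lexI ad (ltW (covers_lt hab)).
rewrite le_eqVlt => /orP[/eqP <- // | a_lt].
by have e := covers_le_eq hab a_lt (leIl _ _); move: nbd; rewrite -e leIr.
Qed.

Lemma walk_cat m n a b c : walk m a b -> walk n b c -> walk (m + n) a c.
Proof.
elim: m a => [|m IH] a /=; first by move=> ->.
by move=> [w [aw wb]] bc; exists w; split => //; apply: IH bc.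
Qed.

Lemma walk_rev n a b : walk n a b -> walk n b a.
Proof.
elim: n a => [|n IH] a; first by move=> /= ->.
move=> [w [aw wb]]; rewrite -addn1; apply: walk_cat (IH _ wb) _.
by exists a; split => //; case: aw; [right | left].
Qed.

Lemma path_lt_le_last a s : path <%O a s -> a <= last a s.
Proof.
elim: s a => //= d s IH a /andP[ad /IH]; exact/le_trans/ltW.
Qed.

Lemma join_meet_lt c z x : ~~ (z <= c) -> x <= c -> (z `&` c) `|` x < z `|` x.
Proof.
move=> z_nle xc; rewrite lt_neqAle leU2 ?leIl // andbT.
apply: contra z_nle => /eqP eq_join.
by apply: le_trans (leUl z x) _; rewrite -eq_join leUx leIr xc.
Qed.

End Covers.

Section UpperSemimodular.
Context {disp : Order.disp_t} {L : latticeType disp}.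
Hypothesis usm : upper_semimodular (L := L).
Implicit Types a b c d : L.

Lemma usm_covers_join a b d :
  covers a b -> a <= d -> ~~ (b <= d) -> covers d (b `|` d).
Proof. by move=> hab ad nbd; apply: usm; rewrite (covers_meet_eq hab ad nbd). Qed.

Lemma covers_joinr a b c :
  covers a b -> a `|` c = b `|` c \/ covers (a `|` c) (b `|` c).
Proof.
move=> hab; have ab := ltW (covers_lt hab).
have [b_le | b_nle] := boolP (b <= a `|` c).
  by left; apply: le_anti; rewrite leU2 //= leUx b_le leUr.
right; have := usm_covers_join hab (leUl a c) b_nle.
by rewrite joinCA joinA (join_r ab).
Qed.

End UpperSemimodular.

Section ChainLength.
Context {disp : Order.disp_t} {L : latticeType disp}.
Hypothesis usm : upper_semimodular (L := L).
Variable N : nat.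
Hypothesis size_chain_le : forall s : seq L, sorted <%O s -> (size s <= N)%N.
Implicit Types a b c d : L.

Fixpoint cover_path a (s : seq L) : Prop :=
  if s is d :: s' then covers a d /\ cover_path d s' else True.

Lemma cover_path_lt a s : cover_path a s -> path <%O a s.
Proof. by elim: s a => //= d s IH a [/covers_lt -> /IH]. Qed.

Definition chain_len a b : nat :=
  \max_(n < N.+1 | `[< exists s, [/\ path <%O a s, last a s = b & size s = n] >]) n.

Lemma chain_len_ub a s : path <%O a s -> (size s <= chain_len a (last a s))%N.
Proof.
move=> a_s; have s_lt : (size s < N.+1)%N := leqW (@size_chain_le (a :: s) a_s).
by apply: (leq_bigmax_cond (Ordinal s_lt)); apply/asboolP; exists s.
Qed.

Lemma chain_len_longest a b : a <= b ->
  exists s, [/\ path <%O a s, last a s = b & size s = chain_len a b].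
Proof.
move=> ab; pose P (n : 'I_N.+1) :=
  `[< exists s, [/\ path <%O a s, last a s = b & size s = n] >].
pose s0 := if a == b then [::] else [:: b].
have a_s0 : path <%O a s0.
  by rewrite /s0; case: ifP => //= /negbT nab; rewrite lt_neqAle nab ab.
have s0_lt : (size s0 < N.+1)%N := leqW (@size_chain_le (a :: s0) a_s0).
have P_gt0 : (0 < #|P|)%N.
  apply/card_gt0P; exists (Ordinal s0_lt); apply/asboolP; exists s0.
  by split=> //; rewrite /s0; case: ifP => // /eqP.
have -> : chain_len a b = \max_(n in P) n by apply: eq_bigl.
have [n Pn ->] := eq_bigmax_cond (@nat_of_ord _) P_gt0.
by move: Pn; rewrite unfold_in => /asboolP.
Qed.

Lemma longest_cover_path a s : path <%O a s ->
  (forall s', path <%O a s' -> last a s' = last a s -> (size s' <= size s)%N) ->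
  cover_path a s.
Proof.
elim: s a => //= d s IH a /andP[ad d_s] longest; split.
  split=> // -[w [aw wd]].
  have := longest [:: w, d & s]; rewrite /= aw wd d_s => /(_ isT erefl).
  by rewrite ltnn.
apply: IH => // s' d_s' last_s'.
by have := longest (d :: s'); rewrite /= ad d_s' last_s' ltnS => /(_ isT erefl).
Qed.

Lemma cover_path_longest a b : a <= b ->
  exists s, [/\ cover_path a s, last a s = b & size s = chain_len a b].
Proof.
move=> /chain_len_longest[s [a_s last_s size_s]]; exists s; split=> //.
apply: longest_cover_path a_s _ => s' a_s' last_s'.
by rewrite size_s -last_s -last_s'; apply: chain_len_ub.
Qed.

(* The Jordan-Dedekind step: a maximal chain from [a] can be rerouted through
   any other cover [c] of [a], losing exactly one element. *)
Lemma cover_path_shift a c s : cover_path a s -> covers a c -> c <= last a s ->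
  exists s', [/\ path <%O c s', last c s' = last a s & (size s').+1 = size s].
Proof.
elim: s a c => [|d s IH] a c /=.
  by move=> _ /covers_lt ac ca; have := lt_le_trans ac ca; rewrite ltxx.
move=> [ad d_s] ac c_last; have a_lt_d := covers_lt ad.
have [cd | ncd] := boolP (c <= d).
  have c_eq_d := covers_le_eq ad (covers_lt ac) cd; subst d.
  by exists s; split=> //; apply: cover_path_lt.
have d_cd := usm_covers_join usm ac (ltW a_lt_d) ncd.
have cd_last : c `|` d <= last d s.
  by rewrite leUx c_last (path_lt_le_last (cover_path_lt d_s)).
have [s' [cd_s' last_s' size_s']] := IH d _ d_s d_cd cd_last.
exists (c `|` d :: s'); split; rewrite /= ?size_s' //.
rewrite cd_s' andbT lt_neqAle leUl andbT; apply/eqP => c_eq.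
have dc : d <= c by rewrite c_eq leUr.
by move: ncd; rewrite (covers_le_eq ac a_lt_d dc) lexx.
Qed.

Lemma chain_len_cover a c b : covers a c -> c <= b ->
  chain_len a b = (chain_len c b).+1.
Proof.
move=> ac cb; have a_lt_c := covers_lt ac.
apply/eqP; rewrite eqn_leq; apply/andP; split.
  have [s [a_s last_s <-]] := cover_path_longest (le_trans (ltW a_lt_c) cb).
  rewrite -last_s in cb *.
  have [s' [c_s' <- <-]] := cover_path_shift a_s ac cb.
  by rewrite ltnS chain_len_ub.
have [s [c_s <- <-]] := chain_len_longest cb.
by have := @chain_len_ub a (c :: s); rewrite /= a_lt_c c_s; apply.
Qed.

Lemma exists_top (x0 : L) : exists t : L, forall x, x <= t.
Proof.
pose P n := `[< exists s : seq L, sorted <%O s /\ size s = n >].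
have P1 : P 1%N by apply/asboolP; exists [:: x0].
have P_ex : exists n, P n by exists 1%N.
have P_le n : P n -> (n <= N)%N by move=> /asboolP[s [s_sorted <-]]; apply: size_chain_le.
have [n /asboolP[[|y s] [s_sorted size_s]] n_max] := ex_maxnP P_ex P_le.
  by have := n_max _ P1; rewrite -size_s.
exists (last y s) => x; apply: contraT => x_nle.
suff /n_max : P n.+1 by rewrite ltnn.
apply/asboolP; exists (rcons (y :: s) (last y s `|` x)).
split; last by rewrite size_rcons size_s.
move: s_sorted; rewrite /= rcons_path => -> /=.
rewrite lt_neqAle leUl andbT; apply/eqP => e.
by move: x_nle; rewrite e leUr.
Qed.

End ChainLength.

Section Corank.
Context {disp : Order.disp_t} {L : latticeType disp}.
Hypothesis usm : upper_semimodular (L := L).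
Variable N : nat.
Hypothesis size_chain_le : forall s : seq L, sorted <%O s -> (size s <= N)%N.
Variable t : L.
Hypothesis le_top : forall x : L, x <= t.
Implicit Types a b c w x : L.

Definition corank a := chain_len N a t.

Lemma corank_cover a c : covers a c -> corank a = (corank c).+1.
Proof.
by move=> ac; rewrite /corank (chain_len_cover usm size_chain_le ac (le_top c)).
Qed.

Lemma walk_up a b : a <= b -> exists n, walk n a b /\ corank a = (corank b + n)%N.
Proof.
move=> /(cover_path_longest size_chain_le)[s [a_s <- _]]; exists (size s).
elim: s a a_s => [|d s IH] a /=; first by rewrite addn0.
move=> [ad d_s]; have [d_walk d_corank] := IH d d_s; split.
  by exists d; split=> //; left.
by rewrite (corank_cover ad) d_corank addnS.
Qed.

Lemma corank_le a b : a <= b -> (corank b <= corank a)%N.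
Proof. by move=> /walk_up[n [_ ->]]; rewrite leq_addr. Qed.

Lemma corank_lt a b : a < b -> (corank b < corank a)%N.
Proof.
move=> ab; have [[|n] [ab_walk ->]] := walk_up (ltW ab).
  by move: ab; rewrite ab_walk ltxx.
by rewrite addnS ltnS leq_addr.
Qed.

Lemma corank_join_cover a b c : covers a b ->
  (corank (b `|` c) <= corank (a `|` c) <= (corank (b `|` c)).+1)%N.
Proof.
move=> ab; case: (covers_joinr usm c ab) => [-> | /corank_cover ->].
  by rewrite leqnn leqnSn.
by rewrite leqnSn leqnn.
Qed.

(* Each step of a walk changes [corank w + corank x - 2 corank (w `|` x)]
   by at most one. *)
Lemma walk_corank_ge n w x : walk n w x ->
  (corank w + corank x <= 2 * corank (w `|` x) + n)%N.
Proof.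
elim: n w => [|n IH] w /=.
  by move=> ->; rewrite joinxx addn0 mul2n addnn.
move=> [w' [[ww' | w'w] w'_walk]]; have := IH _ w'_walk.
  by have := corank_cover ww'; have := corank_join_cover x ww'; lia.
by have := corank_cover w'w; have := corank_join_cover x w'w; lia.
Qed.

Lemma walk_corank w x : walk (corank w + corank x - 2 * corank (w `|` x)) w x.
Proof.
have [n1 [walk1 corank1]] := walk_up (leUl w x).
have [n2 [walk2 corank2]] := walk_up (leUr x w).
have -> : (corank w + corank x - 2 * corank (w `|` x) = n1 + n2)%N by lia.
exact: walk_cat walk1 (walk_rev walk2).
Qed.

Lemma dist_corank w x : dist w x = (corank w + corank x - 2 * corank (w `|` x))%N.
Proof.
rewrite /dist; case: pselect => [ex_walk | no_walk]; last first.
  by case: no_walk; eexists; apply/asboolP; apply: walk_corank.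
case: ex_minnP => n /asboolP n_walk n_min; apply/eqP; rewrite eqn_leq.
rewrite n_min ?andbT; last by apply/asboolP; apply: walk_corank.
by have := walk_corank_ge n_walk; lia.
Qed.

End Corank.

Section Distance.
Context {disp : Order.disp_t} {L : latticeType disp}.
Hypothesis usm : upper_semimodular (L := L).
Hypothesis fin : finite_length (L := L).
Implicit Types a b c w x y z : L.

Lemma exists_dist_corank (x0 : L) : exists g : L -> nat,
  [/\ forall w x, dist w x = (g w + g x - 2 * g (w `|` x))%N,
      {homo g : a b / a <= b >-> (b <= a)%N} &
      {homo g : a b / a < b >-> (b < a)%N}].
Proof.
have [N size_chain_le] := fin; have [t le_top] := exists_top size_chain_le x0.
exists (corank N t); split.
- exact: (dist_corank usm size_chain_le le_top).
- exact: (corank_le usm size_chain_le le_top).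
- exact: (corank_lt usm size_chain_le le_top).
Qed.

Lemma distC w x : dist w x = dist x w.
Proof. by have [g [dE _ _]] := exists_dist_corank w; rewrite !dE joinC addnC. Qed.

Lemma distD a b c : a <= b -> b <= c -> dist a c = (dist a b + dist b c)%N.
Proof.
move=> ab bc; have [g [dE g_le _]] := exists_dist_corank a.
rewrite !dE (join_r ab) (join_r bc) (join_r (le_trans ab bc)).
by have := g_le _ _ ab; have := g_le _ _ bc; lia.
Qed.

Lemma dist_gt0 a b : a < b -> (0 < dist a b)%N.
Proof.
move=> ab; have [g [dE _ g_lt]] := exists_dist_corank a.
by rewrite dE (join_r (ltW ab)); have := g_lt _ _ ab; lia.
Qed.

Lemma dist_join_lt y z x : y <= z -> y `|` x < z `|` x ->
  (dist y x + 2 <= dist z x + dist y z)%N.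
Proof.
move=> yz yx_lt_zx; have [g [dE g_le g_lt]] := exists_dist_corank x.
rewrite !dE (join_r yz).
have := g_lt _ _ yx_lt_zx; have := g_le _ _ yz.
have := g_le _ _ (leUl y x); have := g_le _ _ (leUr x y).
have := g_le _ _ (leUl z x); have := g_le _ _ (leUr x z).
lia.
Qed.

Lemma remoteness_meet_lt k (xi : 'I_k -> L) z c : (0 < k)%N ->
  (forall i, xi i <= c) -> ~~ (z <= c) ->
  (#|[pred i | (xi i >< z)%O]| <= #|[pred i | (xi i < z)%O]|)%N ->
  (remoteness xi (z `&` c) < remoteness xi z)%N.
Proof.
set y := z `&` c => k_gt0 xi_le z_nle card_le.
have yz : y < z.
  by rewrite lt_neqAle leIl andbT; apply: contra z_nle => /eqP <-; apply: leIr.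
set m := dist y z; have m_gt0 : (0 < m)%N by apply: dist_gt0.
have term_le i : (dist y (xi i) + m * (xi i < z)%O + (xi i >< z)
                <= dist z (xi i) + m * (xi i >< z))%N
              /\ ((xi i < z)%O + (xi i >< z) = 1)%N.
  case: (comparableP (xi i) z) => [x_lt | z_lt | x_inc | x_eq] /=.
  - have x_le_y : xi i <= y by rewrite lexI (ltW x_lt) xi_le.
    by rewrite !(distC _ (xi i)) (distD x_le_y (ltW yz)) -/m; lia.
  - by case/negP: z_nle; apply: le_trans (ltW z_lt) (xi_le i).
  - have := dist_join_lt (leIl z c) (join_meet_lt z_nle (xi_le i)).
    by rewrite -/y -/m; lia.
  - by case/negP: z_nle; rewrite -x_eq xi_le.
have : (\sum_i (dist y (xi i) + m * (xi i < z)%O + (xi i >< z))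
         <= \sum_i (dist z (xi i) + m * (xi i >< z)))%N.
  by apply: leq_sum => i _; case: (term_le i).
have : (\sum_i ((xi i < z)%O + (xi i >< z)) = k)%N.
  by rewrite (eq_bigr (fun=> 1%N)) ?sum1_card ?card_ord // => i _; case: (term_le i).
rewrite /remoteness !card_sum_nat /= in card_le *.
rewrite !big_split -!big_distrr /=.
nia.
Qed.

End Distance.

Theorem lemma3p2 (disp : Order.disp_t) (L : bLatticeType disp)
  (hUSM : upper_semimodular (L := L)) (hfin : finite_length (L := L))
  (k : nat) (hk : (0 < k)%N) (xi : 'I_k -> L) (z : L)
  (hz : ~ (z <= \join_(i < k) xi i))
  (hPB : (#|[pred i : 'I_k | (xi i >< z)%O]| <= #|[pred i : 'I_k | (xi i < z)%O]|)%N) :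
  ~ is_median xi z.
Proof.
move=> z_median; have := z_median (z `&` \join_(i < k) xi i).
rewrite leqNgt (remoteness_meet_lt hUSM hfin hk _ _ hPB) //; last exact/negP.
by move=> i; apply: joins_sup.
Qed.
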